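(* Let $p\in R_{\delta+\omega}$. (i) Each $p_{n,\alpha}$ is determined by finitely many variables $x_{l,k}$ with $l<n$. (ii) Each $x_{n,m}$ is determined by finitely many terms $p_{l,k}$ with $l>n$ and $k\in\omega$. More generally, for every ordinal $\beta<\delta$ and every $n\in\omega$ and $\alpha$ with $\beta+\omega\le\alpha<\delta+\omega$, there are $r\in\omega$ and $(l_i,\zeta_i)_{i<r}$ with $l_i>n$ and $\beta<\zeta_i<\beta+\omega$ such that for all assignments $a,b$: if $p_{n,\alpha}\circ a\ne p_{n,\alpha}\circ b$ then $(p_{l_i,\zeta_i}\circ a)_{i<r}\ne(p_{l_i,\zeta_i}\circ b)_{i<r}$.
   Context: Throughout, $\delta$ denotes a nonzero countable limit ordinal. Terms: variables are $x_{l,k}$ ($l,k\in\omega$), each taking values in $\{0,1\}$. A term $t$ is given by a finite sequence of variables $(v_0,\dots,v_{r-1})$ and a function $F:2^r\to2$; a variable $v$ is identified with the term $((v),\mathrm{id})$. An assignment $a$ maps variables to $\{0,1\}$ and extends to terms by $t\circ a=F(v_0\circ a,\dots,v_{r-1}\circ a)$. Terms are identified modulo $t=^*s$ iff $t\circ a=s\circ a$ for all assignments $a$. A term depends only on variables in $Y$ if it is $=^*$ to a term using only variables from $Y$. A term or variable $s$ is determined by terms $t_0,\dots,t_n$ if for all assignments $a,b$, $(t_i\circ a)_{i\le n}=(t_i\circ b)_{i\le n}$ implies $s\circ a=s\circ b$. The forcing $\tilde P$: a condition $\tilde p$ has height $\mathrm{ht}(\tilde p)<\omega_1$ and consists of,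 for every limit $\delta<\mathrm{ht}(\tilde p)$ and $n,m,k\in\omega$: a cofinal $\nu_{\delta,n,m}\subseteq\delta$ of order type $\omega$, with $\nu_{\delta,n,m_1}\cap\nu_{\delta,n,m_2}=\emptyset$ for $m_1\ne m_2$; a strictly increasing $j_{\delta,n,m}:\omega\to\omega$; and a surjective $f_{\delta,n,m,k}:2^{[j_{\delta,n,m}(k),\,j_{\delta,n,m}(k+1)-1]}\to2$; ordered by extension. For $\eta$ into $2$ with domain containing $\nu_{\delta,n,m}$, with $\zeta_i$ the $i$-th element of $\nu_{\delta,n,m}$, $g_{\delta,n,m,k}(\eta)=f_{\delta,n,m,k}((\eta(\zeta_i))_{j_{\delta,n,m}(k)\le i<j_{\delta,n,m}(k+1)})$. A function $\eta'$ with $\delta+m$ in its domain and $\eta$ cohere at $\delta+m$ above $k_0$ (with respect to level $n$) if $\eta'(\delta+m)=g_{\delta,n,m,k}(\eta)$ for all $k\ge k_0$. The set $R$: $R=\bigcup_{\delta<\omega_1}R_{\delta+\omega}$, where $p\in R_{\delta+\omega}$ consists of $\tilde p\in\tilde P$ with $\mathrm{ht}(\tilde p)=\delta+1$ and terms $\bar p=(p_{n,\alpha})_{n\in\omega,\alpha<\delta+\omega}$ such that $p_{n,\delta+m}=x_{n,m}$; for $\alpha<\delta$, $p_{n,\alpha}$ depends only on variables $x_{l,k}$ with $l<n$; and for all $n,m\in\omega$ and all limit $\alpha\le\delta$ there is $k_0$ such that for every assignment $a$, $p_{n,\alpha+m}\circ a=g_{\alpha,n,m,k}((p_{n+1,\zeta}\circ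 a)_{\zeta<\alpha})$ for all $k\ge k_0$ (computed from $\tilde p$). Conditions $p,q$ are identified if $\tilde p=\tilde q$ and $p_{n,\alpha}=^*q_{n,\alpha}$ for all $n,\alpha$. *)

From mathcomp Require Import all_boot.
Set Implicit Arguments. Unset Strict Implicit. Unset Printing Implicit Defensive.

(* ---------- Ordinals ----------
   We fix a nonzero countable limit ordinal delta as an abstract countable
   well-ordered type (D, lt) with no maximum (elements of D = ordinals < delta).
   Ordinals < delta + omega are represented by  D + nat :
   inl beta = beta (< delta),   inr m = delta + m. *)

Definition is_delta (D : Type) (lt : D -> D -> Prop) : Prop :=
  (forall x, ~ lt x x) /\
  (forall x y z, lt x y -> lt y z -> lt x z) /\
  (forall x y, lt x y \/ x = y \/ lt y x) /\
  well_founded lt /\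
  (exists c : D -> nat, injective c) /\
  (exists x : D, True) /\
  (forall x : D, exists y, lt x y).

Definition ltS (D : Type) (lt : D -> D -> Prop) (x y : D + nat) : Prop :=
  match x, y with
  | inl a, inl b => lt a b
  | inl _, inr _ => True
  | inr _, inl _ => False
  | inr m, inr m' => (m < m')%N
  end.

Definition succ_rel (T : Type) (lt : T -> T -> Prop) (x y : T) : Prop :=
  lt x y /\ forall z, lt x z -> z = y \/ lt y z.

Fixpoint plus_nat (T : Type) (lt : T -> T -> Prop) (x : T) (m : nat) (y : T)
  : Prop :=
  match m with
  | 0 => y = x
  | m'.+1 => exists z, plus_nat lt x m' z /\ succ_rel lt z y
  end.

Definition is_limit (D : Type) (lt : D -> D -> Prop) (l : D) : Prop :=
  (exists z, lt z l) /\ (forall z, lt z l -> exists w, lt z w /\ lt w l).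

Definition limit_le_delta (D : Type) (lt : D -> D -> Prop) (a : D + nat) : Prop :=
  a = inr 0 \/ exists l, a = inl l /\ is_limit lt l.

Definition finite_ord (D : Type) (lt : D -> D -> Prop) (g : D) : Prop :=
  exists z k, (forall y, ~ lt y z) /\ plus_nat lt z k g.

Definition omega_plus_le (D : Type) (lt : D -> D -> Prop) (b : D) (a : D + nat)
  : Prop :=
  forall m g, plus_nat lt b m g -> ltS lt (inl g) a.

(* ---------- Terms ----------
   Variable x_{l,k} is the pair (l,k); an assignment is a : nat * nat -> bool.
   A term is a finite sequence of variables with a function F : 2^r -> 2
   (encoded as seq bool -> bool; only its values on sequences of length r
   matter). *)
Record term := Term { tvars : seq (nat * nat); tfun : seq bool -> bool }.

Definition assignment := nat * nat -> bool.

Definition eval (t : term) (a : assignment) : bool :=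
  tfun t [seq a v | v <- tvars t].

Definition term_eq (t s : term) : Prop := forall a, eval t a = eval s a.

Definition depends_below (t : term) (n : nat) : Prop :=
  exists s, all (fun v => (v.1 < n)%N) (tvars s) /\ term_eq s t.

(* ---------- Conditions of R_{delta+omega} ----------
   For each nonzero limit lam <= delta (lam : D + nat) and n, m, k:
   nu lam n m : nat -> D enumerates nu_{lam,n,m} increasingly (zeta_i);
   j lam n m : nat -> nat;  f lam n m k : 2^[j(k), j(k+1)-1] -> 2
   (encoded on seq bool);  P n alpha = p_{n,alpha} for alpha < delta+omega. *)
Record cond (D : Type) := Cond {
  nu : D + nat -> nat -> nat -> nat -> D;
  jj : D + nat -> nat -> nat -> nat -> nat;
  ff : D + nat -> nat -> nat -> nat -> seq bool -> bool;
  P  : nat -> D + nat -> term }.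

Definition gg (D : Type) (p : cond D) (lam : D + nat) (n m k : nat)
  (eta : D -> bool) : bool :=
  ff p lam n m k
    [seq eta (nu p lam n m i) | i <- iota (jj p lam n m k)
                                   (jj p lam n m k.+1 - jj p lam n m k)].

(* tilde p is a condition of tilde P of height delta + 1 *)
Definition tilde_ok (D : Type) (lt : D -> D -> Prop) (p : cond D) : Prop :=
  forall lam, limit_le_delta lt lam ->
  forall n,
    (forall m,
      (forall i, ltS lt (inl (nu p lam n m i)) lam) /\
      (forall i, lt (nu p lam n m i) (nu p lam n m i.+1)) /\
      (forall z, ltS lt (inl z) lam -> exists i, lt z (nu p lam n m i)) /\
      (forall k, (jj p lam n m k < jj p lam n m k.+1)%N) /\
      (forall k (b : bool), exists s : seq bool,
          size s = (jj p lam n m k.+1 - jj p lam n m k)%N /\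
          ff p lam n m k s = b)) /\
    (forall m1 m2 i1 i2, m1 <> m2 -> nu p lam n m1 i1 <> nu p lam n m2 i2).

Definition in_R (D : Type) (lt : D -> D -> Prop) (p : cond D) : Prop :=
  [/\ tilde_ok lt p,
      (forall n m a, eval (P p n (inr m)) a = a (n, m)),
      (forall n (b : D), depends_below (P p n (inl b)) n) &
      (forall n m lam, limit_le_delta lt lam ->
         exists k0, forall (a : assignment) k, (k0 <= k)%N ->
           forall g, plus_nat (ltS lt) lam m g ->
             eval (P p n g) a =
             gg p lam n m k (fun z => eval (P p n.+1 (inl z)) a))].

From mathcomp Require Import all_boot.
From mathcomp Require Import zify.
From Stdlib Require Import Classical.

Set Implicit Arguments. Unset Strict Implicit.

(* Every alpha < delta + omega has the form lam + m with lam <= delta a nonzero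
   limit. By coherence, p_{n,lam+m} is eventually g_{lam,n,m,k} applied to the
   finitely many p_{n+1,zeta} with zeta in a block of nu_{lam,n,m}, and for k
   large all these zeta exceed beta. Such a zeta either lies in the window
   (beta, beta + omega), where p_{n+1,zeta} is kept as a separating term, or
   lies above beta + omega and below alpha, where well-founded induction
   applies at level n+1. If p_{n,alpha} differs on a and b, then so does one
   argument of g, so finite separating families propagate upwards. *)

Lemma plus_nat_cons (T : Type) (lt : T -> T -> Prop) z c m b :
  succ_rel lt z c -> plus_nat lt c m b -> plus_nat lt z m.+1 b.
Proof.
move=> zc; elim: m b => [|m IHm] b /=; first by move->; exists z.
by move=> [w [cw wb]]; exists w; split => //; apply: IHm.
Qed.

Lemma well_founded_min (T : Type) (lt : T -> T -> Prop) (Q : T -> Prop) :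
  well_founded lt -> (exists x, Q x) ->
  exists x, Q x /\ forall y, lt y x -> ~ Q y.
Proof.
move=> lt_wf [x0 Qx0]; apply: NNPP => nomin.
suff: forall x, ~ Q x by move/(_ x0).
elim/(well_founded_ind lt_wf) => x IHx Qx.
by apply: nomin; exists x.
Qed.

Section OrdinalArithmetic.

Variables (D : Type) (lt : D -> D -> Prop).
Hypothesis ltxx : forall x, ~ lt x x.
Hypothesis lt_trans : forall x y z, lt x y -> lt y z -> lt x z.
Hypothesis lt_total : forall x y, lt x y \/ x = y \/ lt y x.
Hypothesis lt_wf : well_founded lt.

Lemma plus_nat_between c m g zeta :
  plus_nat lt c m g -> zeta = c \/ lt c zeta -> zeta = g \/ lt zeta g ->
  exists k, (k <= m)%N /\ plus_nat lt c k zeta /\ plus_nat lt zeta (m - k) g.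
Proof.
elim: m g => [|m IHm] g /=.
  move=> -> [->|c_zeta]; first by exists 0.
  case=> [E|zeta_c]; first by subst; case: (ltxx c_zeta).
  by case: (ltxx (lt_trans c_zeta zeta_c)).
move=> [h [ch [hg h_succ]]] c_zeta [->|zeta_g].
  by exists m.+1; rewrite subnn; split => //; split => //; exists h.
have zeta_h : zeta = h \/ lt zeta h.
  case: (lt_total h zeta) => [h_zeta|[->|]]; [|by left|by right].
  case: (h_succ _ h_zeta) => [E|g_zeta]; first by subst; case: (ltxx zeta_g).
  by case: (ltxx (lt_trans zeta_g g_zeta)).
have [k [km [ck kh]]] := IHm h ch c_zeta zeta_h.
by exists k; split; [lia | split => //; rewrite subSn //; exists h].
Qed.

Lemma above_window_or_beyond beta zeta : lt beta zeta ->
  (exists k, (0 < k)%N /\ plus_nat lt beta k zeta) \/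
  (forall m g, plus_nat lt beta m g -> lt g zeta).
Proof.
move=> beta_zeta.
case: (classic (forall m g, plus_nat lt beta m g -> lt g zeta)); first by right.
move=> not_beyond; left; apply: NNPP => not_window; apply: not_beyond => m g bg.
apply: NNPP => not_g_zeta.
have zeta_g : zeta = g \/ lt zeta g.
  by case: (lt_total zeta g) => [|[]]; [right|left|].
have [[|k] [_ [bk _]]] := plus_nat_between bg (or_intror beta_zeta) zeta_g.
  by rewrite /= in bk; subst; case: (ltxx beta_zeta).
by apply: not_window; exists k.+1.
Qed.

(* b is then lam + m with lam the least ordinal from which b is reached by
   finitely many successors; minimality makes lam a limit. *)
Lemma limit_plus_nat_decomp beta b :
  (forall m g, plus_nat lt beta m g -> lt g b) ->
  exists lam m, [/\ is_limit lt lam, lt beta lam & plus_nat lt lam m b].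
Proof.
move=> beyond.
have [lam [[m lam_b] lam_min]] := well_founded_min
  (Q := fun c => exists m, plus_nat lt c m b) lt_wf (ex_intro _ b (ex_intro _ 0 erefl)).
have beta_lam : lt beta lam.
  case: (lt_total beta lam) => [//|lam_beta].
  have lam_beta' : beta = lam \/ lt lam beta by case: lam_beta; [left|right].
  have [k [_ [_ bk]]] := plus_nat_between lam_b lam_beta' (or_intror (beyond 0 _ erefl)).
  by case: (ltxx (beyond _ _ bk)).
exists lam, m; split => //; split; first by exists beta.
move=> z z_lam; apply: NNPP => no_between.
have z_succ : succ_rel lt z lam.
  split => // y z_y; case: (lt_total y lam) => [y_lam|[|]]; [|by left|by right].
  by case: no_between; exists y.
by apply: (lam_min z z_lam); exists m.+1; apply: plus_nat_cons z_succ lam_b.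
Qed.

End OrdinalArithmetic.

Lemma plus_nat_inl (D : Type) (lt : D -> D -> Prop) c m b :
  plus_nat lt c m b -> plus_nat (ltS lt) (inl c) m (inl b).
Proof.
elim: m b => [|m IHm] b /=; first by move->.
move=> [w [cw [wb w_succ]]]; exists (inl w); split; first exact: IHm.
split => //= -[y|k] //= wy; last by right.
by case: (w_succ y wy) => [->|]; [left|right].
Qed.

Lemma plus_nat_inr (D : Type) (lt : D -> D -> Prop) m :
  plus_nat (ltS lt) (inr 0) m (inr m).
Proof.
elim: m => [|m IHm] //=; exists (inr m); split => //; split => //= -[y|k] //.
by rewrite /= leq_eqVlt => /orP[/eqP <-|]; [left|right].
Qed.

Lemma ltS_trans (D : Type) (lt : D -> D -> Prop) :
  (forall x y z, lt x y -> lt y z -> lt x z) ->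
  forall x y z, ltS lt x y -> ltS lt y z -> ltS lt x z.
Proof. by move=> lt_trans [x|x] [y|y] [z|z] //=; [apply: lt_trans | apply: ltn_trans]. Qed.

Lemma ltS_plus_nat (D : Type) (lt : D -> D -> Prop) :
  (forall x y z, lt x y -> lt y z -> lt x z) ->
  forall zeta lam m alpha,
  ltS lt zeta lam -> plus_nat (ltS lt) lam m alpha -> ltS lt zeta alpha.
Proof.
move=> lt_trans zeta lam m alpha zeta_lam.
elim: m alpha => [|m IHm] alpha /=; first by move->.
by move=> [w [lam_w [w_alpha _]]]; exact: (ltS_trans lt_trans (IHm _ lam_w) w_alpha).
Qed.

Lemma gg_neq_arg (D : Type) (p : cond D) lam n m k (eta eta' : D -> bool) :
  gg p lam n m k eta <> gg p lam n m k eta' ->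
  exists2 i, i \in iota (jj p lam n m k) (jj p lam n m k.+1 - jj p lam n m k) &
                   eta (nu p lam n m i) <> eta' (nu p lam n m i).
Proof.
move=> neq; apply: NNPP => all_eq; apply: neq; rewrite /gg; congr ff.
by apply/eq_in_map => i i_block; apply: NNPP => ?; apply: all_eq; exists i.
Qed.

Definition window_separated (D : Type) (lt : D -> D -> Prop) (p : cond D)
  (beta : D) (n : nat) (bad : assignment -> assignment -> Prop) : Prop :=
  exists r (l : nat -> nat) (z : nat -> D),
    (forall i, (i < r)%N ->
       (n < l i)%N /\ exists k, (0 < k)%N /\ plus_nat lt beta k (z i)) /\
    forall a b, bad a b -> exists i, (i < r)%N /\
      eval (P p (l i) (inl (z i))) a <> eval (P p (l i) (inl (z i))) b.

Section WindowSeparation.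

Variables (D : Type) (lt : D -> D -> Prop) (p : cond D) (beta : D).

Lemma window_separatedU n bad1 bad2 :
  window_separated lt p beta n bad1 -> window_separated lt p beta n bad2 ->
  window_separated lt p beta n (fun a b => bad1 a b \/ bad2 a b).
Proof.
move=> [r1 [l1 [z1 [ok1 sep1]]]] [r2 [l2 [z2 [ok2 sep2]]]].
exists (r1 + r2), (fun i => if (i < r1)%N then l1 i else l2 (i - r1)),
  (fun i => if (i < r1)%N then z1 i else z2 (i - r1)); split.
  by move=> i ir; case: (ltnP i r1) => i_r1; [apply: ok1 | apply: ok2; lia].
move=> a b [/sep1 [i [ir1 neq]] | /sep2 [i [ir2 neq]]].
  by exists i; rewrite ir1; split => //; lia.
exists (r1 + i); split; first lia.
have -> : (r1 + i < r1)%N = false by lia.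
by rewrite addKn.
Qed.

Lemma window_separatedW n bad1 bad2 :
  (forall a b, bad2 a b -> bad1 a b) ->
  window_separated lt p beta n bad1 -> window_separated lt p beta n bad2.
Proof. by move=> sub [r [l [z [ok sep]]]]; exists r, l, z; split=> // a b /sub/sep. Qed.

Lemma window_separated_leq n n' bad :
  (n' <= n)%N -> window_separated lt p beta n bad -> window_separated lt p beta n' bad.
Proof.
move=> n'n [r [l [z [ok sep]]]]; exists r, l, z; split => // i ir.
by have [? ?] := ok i ir; split => //; lia.
Qed.

Lemma window_separated_big n (bad : nat -> assignment -> assignment -> Prop)
  (s : seq nat) :
  (forall x, x \in s -> window_separated lt p beta n (bad x)) ->
  window_separated lt p beta n (fun a b => exists2 x, x \in s & bad x a b).
Proof.
elim: s => [|x s IHs] sep_s.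
  by exists 0, (fun=> 0), (fun=> beta); split => // a b [].
have sep_x := sep_s x (mem_head x s).
have sep_rest : window_separated lt p beta n
    (fun a b => exists2 y, y \in s & bad y a b).
  by apply: IHs => y ys; apply: sep_s; rewrite in_cons ys orbT.
apply: window_separatedW (window_separatedU sep_x sep_rest) => a b [y].
by rewrite in_cons => /orP[/eqP-> | ys]; [left | right; exists y].
Qed.

Lemma window_separated_window n l zeta :
  (n < l)%N -> (exists k, (0 < k)%N /\ plus_nat lt beta k zeta) ->
  window_separated lt p beta n
    (fun a b => eval (P p l (inl zeta)) a <> eval (P p l (inl zeta)) b).
Proof. by move=> nl zeta_w; exists 1, (fun=> l), (fun=> zeta); split=> // a b; exists 0. Qed.

End WindowSeparation.

Section Separation.

Variables (D : Type) (lt : D -> D -> Prop) (p : cond D).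
Hypothesis ltxx : forall x, ~ lt x x.
Hypothesis lt_trans : forall x y z, lt x y -> lt y z -> lt x z.
Hypothesis lt_total : forall x y, lt x y \/ x = y \/ lt y x.
Hypothesis lt_wf : well_founded lt.
Hypothesis p_R : in_R lt p.

Definition separates_at (beta : D) (n : nat) (alpha : D + nat) : Prop :=
  window_separated lt p beta n
    (fun a b => eval (P p n alpha) a <> eval (P p n alpha) b).

Lemma jj_ge lam n m k : limit_le_delta lt lam -> (k <= jj p lam n m k)%N.
Proof.
case: p_R => p_tilde _ _ _ lam_lim.
have [/(_ m) [_ [_ [_ [jj_incr _]]]] _] := p_tilde lam lam_lim n.
by elim: k => [//|k IHk]; apply: leq_ltn_trans IHk (jj_incr k).
Qed.

Lemma nu_eventually_above lam n m beta :
  limit_le_delta lt lam -> ltS lt (inl beta) lam ->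
  exists i0, forall i, (i0 <= i)%N -> lt beta (nu p lam n m i).
Proof.
case: p_R => p_tilde _ _ _ lam_lim beta_lam.
have [/(_ m) [_ [nu_incr [nu_cof _]]] _] := p_tilde lam lam_lim n.
have [i0 beta_i0] := nu_cof beta beta_lam.
exists i0 => i /subnKC <-; elim: (i - i0) => [|d IHd]; first by rewrite addn0.
by rewrite addnS; apply: lt_trans IHd (nu_incr _).
Qed.

Lemma separates_at_coherent beta lam m alpha :
  limit_le_delta lt lam -> ltS lt (inl beta) lam -> plus_nat (ltS lt) lam m alpha ->
  (forall zeta, ltS lt (inl zeta) alpha ->
     (forall k g, plus_nat lt beta k g -> lt g zeta) ->
     forall n, separates_at beta n (inl zeta)) ->
  forall n, separates_at beta n alpha.
Proof.
move=> lam_lim beta_lam lam_alpha IH n.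
have [p_tilde _ _ p_coh] := p_R.
have [k0 coh] := p_coh n m lam lam_lim.
have [i0 above] := nu_eventually_above n m lam_lim beta_lam.
have [/(_ m) [nu_lam _] _] := p_tilde lam lam_lim n.
set k := maxn k0 i0.
pose block := iota (jj p lam n m k) (jj p lam n m k.+1 - jj p lam n m k).
have sep_block : window_separated lt p beta n (fun a b => exists2 x, x \in block &
    eval (P p n.+1 (inl (nu p lam n m x))) a <> eval (P p n.+1 (inl (nu p lam n m x))) b).
  apply: window_separated_big => x.
  rewrite mem_iota => /andP[jk_x _].
  have i0_x : (i0 <= x)%N.
    by apply: leq_trans jk_x; apply: leq_trans (jj_ge n m k lam_lim); apply: leq_maxr.
  have x_alpha := ltS_plus_nat lt_trans (nu_lam x) lam_alpha.
  case: (above_window_or_beyond ltxx lt_trans lt_total (above x i0_x)) => [window|beyond].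
    exact: window_separated_window.
  exact: window_separated_leq (leqnSn n) (IH _ x_alpha beyond n.+1).
apply: window_separatedW sep_block => a b.
rewrite (coh a k (leq_maxl _ _) _ lam_alpha) (coh b k (leq_maxl _ _) _ lam_alpha).
exact: gg_neq_arg.
Qed.

Lemma separates_at_below_delta beta b :
  (forall m g, plus_nat lt beta m g -> lt g b) ->
  forall n, separates_at beta n (inl b).
Proof.
elim/(well_founded_ind lt_wf): b => b IHb beyond.
have [lam [m [lam_lim beta_lam lam_b]]] :=
  limit_plus_nat_decomp ltxx lt_trans lt_total lt_wf beyond.
apply: (separates_at_coherent (lam := inl lam) (m := m)).
- by right; exists lam.
- exact: beta_lam.
- exact: plus_nat_inl.
- by move=> zeta; apply: IHb.
Qed.

Lemma separates_at_omega_plus_le beta n alpha :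
  omega_plus_le lt beta alpha -> separates_at beta n alpha.
Proof.
case: alpha => [b|m] beyond; first exact: separates_at_below_delta.
apply: (separates_at_coherent (lam := inr 0) (m := m)) => //.
- by left.
- exact: plus_nat_inr.
- by move=> zeta _; apply: separates_at_below_delta.
Qed.

End Separation.

Lemma depends_below_finite_support (t : term) n :
  depends_below t n -> exists r (v : nat -> nat * nat),
    (forall i, (i < r)%N -> ((v i).1 < n)%N) /\
    forall a b : assignment, (forall i, (i < r)%N -> a (v i) = b (v i)) ->
      eval t a = eval t b.
Proof.
move=> [s [s_below s_t]].
exists (size (tvars s)), (nth (0, 0) (tvars s)); split.
  by move=> i i_s; apply: (allP s_below); apply: mem_nth.
move=> a b ab; rewrite -!s_t /eval; congr tfun.
apply/eq_in_map => v v_s; rewrite -(nth_index (0, 0) v_s).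
by apply: ab; rewrite index_mem.
Qed.

Theorem mainTheorem10 (D : Type) (lt : D -> D -> Prop) (HD : is_delta lt)
  (p : cond D) (Hp : in_R lt p) :
  (* (i) *)
  (forall n (b : D), exists r (v : nat -> nat * nat),
     (forall i, (i < r)%N -> ((v i).1 < n)%N) /\
     forall a b' : assignment, (forall i, (i < r)%N -> a (v i) = b' (v i)) ->
       eval (P p n (inl b)) a = eval (P p n (inl b)) b') /\
  (* (ii) *)
  (forall n m, exists r (l : nat -> nat) (z : nat -> D),
     (forall i, (i < r)%N -> (n < l i)%N /\ finite_ord lt (z i)) /\
     forall a b : assignment,
       (forall i, (i < r)%N ->
          eval (P p (l i) (inl (z i))) a = eval (P p (l i) (inl (z i))) b) ->
       a (n, m) = b (n, m)) /\
  (* general form *)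
  (forall (beta : D) n (alpha : D + nat), omega_plus_le lt beta alpha ->
     exists r (l : nat -> nat) (z : nat -> D),
     (forall i, (i < r)%N ->
        (n < l i)%N /\ exists k, (0 < k)%N /\ plus_nat lt beta k (z i)) /\
     forall a b : assignment,
       eval (P p n alpha) a <> eval (P p n alpha) b ->
       exists i, (i < r)%N /\
         eval (P p (l i) (inl (z i))) a <> eval (P p (l i) (inl (z i))) b).
Proof.
have [ltxx [lt_trans [lt_total [lt_wf [_ [[x0 _] _]]]]]] := HD.
have [_ p_var p_dep _] := Hp.
have separates := separates_at_omega_plus_le ltxx lt_trans lt_total lt_wf Hp.
split; [|split]; last exact: separates.
  by move=> n b; apply: depends_below_finite_support (p_dep n b).
move=> n m.
(* x_{n,m} = p_{n,delta+m}, and delta + m lies beyond 0 + omega. *)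
have [z0 [_ z0_min]] := well_founded_min (Q := fun=> True) lt_wf (ex_intro _ x0 I).
have [r [l [z [ok sep]]]] := separates z0 n (inr m) (fun _ _ _ => I).
exists r, l, z; split.
  move=> i ir; have [n_l [k [_ z0_k]]] := ok i ir; split => //.
  by exists z0, k; split => // y y_z0; apply: z0_min y y_z0 I.
move=> a b same; apply: NNPP => ab.
have p_neq : eval (P p n (inr m)) a <> eval (P p n (inr m)) b by rewrite !p_var.
have [i [ir]] := sep a b p_neq.
by apply; apply: same.
Qed.
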